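(* Let $k=4$, $t\ge 2$, $m=2^t-3$, and let $n$ be an integer with $0\le n\le m$, $i=m-n$. Then in $\mathbb{F}_2[w_2,w_3,w_4]$, \[ q_iq_n+q_{i+1}q_{n-1}+(q_{i+2}+w_2q_i)q_{n-2}+(q_{i+3}+w_2q_{i+1}+w_3q_i)q_{n-3}=0, \] a homogeneous relation of degree $2^t-3$ among $q_{n-3},\dots,q_n$.
   Context: In $\mathbb{F}_2[w_2,w_3,w_4]$ ($\deg w_i=i$), $q_0=1$, $q_m=0$ for $m<0$, and $q_m=w_2q_{m-2}+w_3q_{m-3}+w_4q_{m-4}$ for $m\ge1$. *)

From HB Require Import structures.
From mathcomp Require Import all_boot all_order all_algebra.
From mathcomp Require Export mpoly.
Set Implicit Arguments. Unset Strict Implicit. Unset Printing Implicit Defensive.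
Import GRing.Theory.
Local Open Scope ring_scope.

Notation PR := {mpoly 'F_2[3]}.
Definition w2 : PR := 'X_(inord 0).
Definition w3 : PR := 'X_(inord 1).
Definition w4 : PR := 'X_(inord 2).

(* qstate m = (q_m, q_{m-1}, q_{m-2}, q_{m-3}), with q_j = 0 for j < 0;
   q_0 = 1 and q_{m+1} = w2 q_{m-1} + w3 q_{m-2} + w4 q_{m-3}. *)
Fixpoint qstate (m : nat) : PR * PR * PR * PR :=
  match m with
  | 0 => (1, 0, 0, 0)
  | m'.+1 =>
      let: (a, b, c, d) := qstate m' in
      (w2 * b + w3 * c + w4 * d, a, b, c)
  end.

Definition qnat (m : nat) : PR := (qstate m).1.1.1.

Definition q (m : int) : PR :=
  match m with
  | Posz k => qnat k
  | Negz _ => 0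
  end.

From mathcomp Require Import all_boot all_order all_algebra.
From mathcomp Require Import mpoly.
From mathcomp Require Import ring zify.
Set Implicit Arguments. Unset Strict Implicit. Unset Printing Implicit Defensive.
Import GRing.Theory.
Local Open Scope ring_scope.

(* The sequence q_m satisfies q_m = w2 q_(m-2) + w3 q_(m-3) + w4 q_(m-4),
   with q_0 = 1 and q_m = 0 for m < 0.  Working with the shifted sequence
   u_k = q_(k-4), indexed by naturals, over an arbitrary commutative ring
   with arbitrary coefficients c2, c3, c4, we prove:
   - the addition formula  u_(a+b+4) = u_(a+4) u_(b+4) + u_(a+5) u_(b+3)
       + (u_(a+6) - c2 u_(a+4)) u_(b+2) + (u_(a+7) - c2 u_(a+5) - c3 u_(a+4)) u_(b+1),
     by shifting one unit from b to a (the right side does not change);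
   - in characteristic 2, the addition formula with a = j+1, b = j collapses
     to the doubling rule  u_(2j+5) = c3 u_(j+3)^2, since all cross terms
     occur twice; iterating it from u_5 = 0 gives u_(2^t+1) = 0 for t >= 2.
   For F_2[w2,w3,w4] the addition formula with a = m - n, b = n is exactly
   the relation of the theorem, its value being q_m = u_(2^t+1) = 0. *)

Section ShiftedSequence.

Variables (R : comNzRingType) (c2 c3 c4 : R).

(* u_k = q_(k-4): zero for k < 4, u_4 = 1, then the recurrence. *)
Fixpoint qseq (k : nat) : R :=
  match k with
  | 0 | 1 | 2 | 3 => 0
  | 4 => 1
  | (((k'.+1 as a).+1 as b).+1 as c).+2 => c2 * qseq c + c3 * qseq b + c4 * qseq a
  end.

Lemma qseqS k : qseq k.+4.+1 = c2 * qseq k.+3 + c3 * qseq k.+2 + c4 * qseq k.+1.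
Proof. by []. Qed.

Definition addF (a b : nat) : R :=
  qseq a.+4 * qseq b.+4 + qseq a.+4.+1 * qseq b.+3
  + (qseq a.+4.+2 - c2 * qseq a.+4) * qseq b.+2
  + (qseq a.+4.+3 - c2 * qseq a.+4.+1 - c3 * qseq a.+4) * qseq b.+1.

Lemma addF_shift a b : addF a b.+1 = addF a.+1 b.
Proof. by rewrite /addF qseqS (qseqS a.+3); ring. Qed.

Lemma qseq_add a b : qseq (a + b).+4 = addF a b.
Proof.
elim: b a => [|b IH] a.
  by rewrite /addF addn0 /= !mulr0 !addr0 mulr1.
by rewrite addF_shift -IH addSnnS.
Qed.

Section CharacteristicTwo.

Hypothesis pcharR2 : 2 \in [pchar R].

(* Doubling rule: in addF (j+1) j all terms but c3 u_(j+3)^2 pair up. *)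
Lemma qseq_double_odd j : qseq (j + j).+4.+1 = c3 * qseq j.+3 ^+ 2.
Proof.
rewrite -addSn qseq_add /addF !qseqS.
pose cross := c2 * qseq j.+3 * qseq j.+4 + c4 * qseq j.+2 * qseq j.+3
  + c3 * qseq j.+2 * qseq j.+4 + c4 * qseq j.+1 * qseq j.+4.
(* The difference of the two sides is twice the sum of the cross terms. *)
rewrite -[RHS]addr0 -(mulrn_pchar pcharR2 cross) /cross.
ring.
Qed.

(* u_(2^t+1) = 0 for t >= 2: u_5 = 0, and u_(2^(t+1)+1) = c3 u_(2^t+1)^2. *)
Lemma qseq_pow2 t : qseq (2 ^ t.+2).+1 = 0.
Proof.
elim: t => [|t IH]; first by rewrite /= !mulr0 !addr0.
have pow_pos : (0 < 2 ^ t)%N by rewrite expn_gt0.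
have -> : (2 ^ t.+3).+1 = ((2 ^ t.+2 - 2) + (2 ^ t.+2 - 2)).+4.+1.
  by rewrite !expnS; lia.
rewrite qseq_double_odd.
have -> : (2 ^ t.+2 - 2).+3 = (2 ^ t.+2).+1 by rewrite !expnS; lia.
by rewrite IH expr0n mulr0.
Qed.

End CharacteristicTwo.

End ShiftedSequence.

Lemma pchar_PR : 2 \in [pchar PR].
Proof. exact: (rmorph_pchar (@mpolyC 3 'F_2) (pchar_Fp (p := 2) isT)). Qed.

Lemma qstate_qseq k :
  qstate k = (qseq w2 w3 w4 k.+4, qseq w2 w3 w4 k.+3,
              qseq w2 w3 w4 k.+2, qseq w2 w3 w4 k.+1).
Proof. by elim: k => [|k /= ->]. Qed.

(* q_z = u_(z+4), stated for any integer z = k - 4 to ease rewriting. *)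
Lemma q_shift (z : int) (k : nat) : z = k%:Z - 4 -> q z = qseq w2 w3 w4 k.
Proof.
move=> ->; case: k => [|[|[|[|j]]]] //.
have -> : j.+4%:Z - 4 = j%:Z by lia.
by rewrite /= /qnat qstate_qseq.
Qed.

Lemma q_add (a b : nat) :
  q a * q b + q (a%:Z + 1) * q (b%:Z - 1)
  + (q (a%:Z + 2) + w2 * q a) * q (b%:Z - 2)
  + (q (a%:Z + 3) + w2 * q (a%:Z + 1) + w3 * q a) * q (b%:Z - 3)
  = q (a + b)%N.
Proof.
rewrite (@q_shift (a + b)%N (a + b).+4 ltac:(lia))
  (@q_shift a a.+4 ltac:(lia)) (@q_shift b b.+4 ltac:(lia))
  (@q_shift (a%:Z + 1) a.+4.+1 ltac:(lia)) (@q_shift (b%:Z - 1) b.+3 ltac:(lia))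
  (@q_shift (a%:Z + 2) a.+4.+2 ltac:(lia)) (@q_shift (b%:Z - 2) b.+2 ltac:(lia))
  (@q_shift (a%:Z + 3) a.+4.+3 ltac:(lia)) (@q_shift (b%:Z - 3) b.+1 ltac:(lia)).
by rewrite qseq_add /addF !(oppr_pchar2 pchar_PR).
Qed.

Lemma q_pow2_sub3 t : (2 <= t)%N -> q (2 ^ t - 3)%N = 0.
Proof.
case: t => [|[|t]] // _.
have pow_ge4 : (4 <= 2 ^ t.+2)%N by rewrite -[4%N]/(2 ^ 2)%N leq_exp2l.
rewrite (@q_shift (2 ^ t.+2 - 3)%N (2 ^ t.+2).+1 ltac:(lia)).
exact: (qseq_pow2 _ _ _ pchar_PR).
Qed.

Theorem mainTheorem10 (t n : nat) :
  (2 <= t)%N -> (n <= 2 ^ t - 3)%N ->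
  let m : int := (2 ^ t - 3)%N in
  let i : int := m - n%:Z in
  q i * q n%:Z + q (i + 1) * q (n%:Z - 1)
  + (q (i + 2) + w2 * q i) * q (n%:Z - 2)
  + (q (i + 3) + w2 * q (i + 1) + w3 * q i) * q (n%:Z - 3) = 0.
Proof.
move=> ht hn m i.
(* i = m - n is a natural number, so the relation is the addition formula. *)
have -> : i = (2 ^ t - 3 - n)%N by rewrite /i /m; lia.
by rewrite q_add (subnK hn); exact: q_pow2_sub3.
Qed.
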